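(* Let $Z,W,Y$ be Hilbert spaces. Assume: $A$ (resp. $E$) is a closed densely defined operator on $Z$ (resp. $W$); $C:D(A)\to Y$ and $F:Y\to D(E^* )'$ are bounded; $A$ and $E$ are diagonalizable in Riesz bases $(z_j)_{j\ge1}$ of $Z$ and $(w_k)_{k\ge1}$ of $W$ with $Az_j=\lambda_jz_j$, $Ew_k=\mu_kw_k$; and $A$ and $E$ share no eigenvalue. Let $\mathcal{A}$ be the operator on $\mathcal{X}=Z\times W$ given by $\mathcal{A}(z,w)=(Az,\ FCz+E_{-1}w)$ on $D(\mathcal{A})=\{(z,w)\in D(A)\times W: E_{-1}w+FCz\in W\}$, whose eigenvectors are $\mathbf{Z}_k=(0,w_k)$ and $\mathbf{Z}_j=(z_j,(\lambda_j-E)^{-1}FCz_j)$. If $$\sum_j\|(\lambda_j-E)^{-1}FCz_j\|_W^2<\infty,$$ then the normalized eigenvectors $\{\mathbf{Z}_j/\|\mathbf{Z}_j\|_{\mathcal{X}}\}_j\cup\{\mathbf{Z}_k/\|\mathbf{Z}_k\|_{\mathcal{X}}\}_k$ form a Riesz basis of $\mathcal{X}$.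
   Context: $D(E^* )'$ denotes the dual of $D(E^* )$ with pivot $W$, $E_{-1}:W\to D(E^* )'$ the unique continuous extension of $E$, and $(\lambda_j-E)^{-1}$ is understood as the resolvent extended to $D(E^* )'\to W$. *)

From HB Require Import structures.
From mathcomp Require Import all_boot all_order all_algebra.
From mathcomp Require Import complex.
From mathcomp Require Import reals.
Set Implicit Arguments. Unset Strict Implicit. Unset Printing Implicit Defensive.
Import Order.TTheory GRing.Theory Num.Theory.
Local Open Scope ring_scope.
Local Open Scope complex_scope.

Section Hilbert.
Variables (R : rcfType) (V : lmodType R[i]) (ip : V -> V -> R[i]).

Definition is_inner_product : Prop :=
  [/\ (forall (a : R[i]) (x y z : V), ip (a *: x + y) z = a * ip x z + ip y z),
      (forall x y : V, ip y x = conjc (ip x y)),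
      (forall x : V, 0 <= ip x x) &
      (forall x : V, ip x x = 0 -> x = 0)].

Definition hnorm (x : V) : R := Num.sqrt (@complex.Re R (ip x x)).

Definition tendsto (u : nat -> V) (x : V) : Prop :=
  forall e : R, 0 < e -> exists N : nat, forall n, (N <= n)%N -> hnorm (u n - x) < e.

Definition cauchy_seq (u : nat -> V) : Prop :=
  forall e : R, 0 < e -> exists N : nat, forall n m, (N <= n)%N -> (N <= m)%N ->
    hnorm (u n - u m) < e.

Definition hilbert : Prop :=
  is_inner_product /\ forall u, cauchy_seq u -> exists x, tendsto u x.

Definition dense (S : V -> Prop) : Prop :=
  forall x, exists u : nat -> V, (forall n, S (u n)) /\ tendsto u x.

Definition linear_on (D : V -> Prop) (T : V -> V) : Prop :=
  D 0 /\ forall (a : R[i]) x y, D x -> D y ->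
    D (a *: x + y) /\ T (a *: x + y) = a *: T x + T y.

Definition closed_densely_defined (D : V -> Prop) (T : V -> V) : Prop :=
  [/\ linear_on D T, dense D &
      forall (u : nat -> V) x y, (forall n, D (u n)) -> tendsto u x ->
        tendsto (fun n => T (u n)) y -> D x /\ T x = y].

Definition is_adjoint (D : V -> Prop) (T : V -> V) (Ds : V -> Prop) (Ts : V -> V)
  : Prop :=
  (forall phi, Ds phi <-> exists psi, forall w, D w -> ip (T w) phi = ip w psi) /\
  (forall phi w, Ds phi -> D w -> ip (T w) phi = ip w (Ts phi)).

Definition op_eigenvalue (D : V -> Prop) (T : V -> V) (l : R[i]) : Prop :=
  exists x, [/\ x <> 0, D x & T x = l *: x].

Definition orthonormal_basis (I : Type) (e : I -> V) : Prop :=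
  (forall i, ip (e i) (e i) = 1) /\ (forall i j, i <> j -> ip (e i) (e j) = 0) /\
  (forall x, (forall i, ip x (e i) = 0) -> x = 0).

Definition bounded_linear_endo (T : V -> V) : Prop :=
  (forall (a : R[i]) x y, T (a *: x + y) = a *: T x + T y) /\
  exists M : R, forall x, hnorm (T x) <= M * hnorm x.

(* Riesz basis: image of an orthonormal basis under a bounded bijective
   linear operator (its inverse is then bounded by the open mapping thm). *)
Definition riesz_basis (I : Type) (x : I -> V) : Prop :=
  exists (e : I -> V) (T : V -> V),
    [/\ orthonormal_basis e, bounded_linear_endo T, bijective T &
        forall i, x i = T (e i)].

Definition normalize (x : V) : V := ((hnorm x)^-1)%:C *: x.
End Hilbert.

Definition bounded_on_domain (R : rcfType) (Z Y : lmodType R[i])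
  (ipZ : Z -> Z -> R[i]) (ipY : Y -> Y -> R[i]) (DA : Z -> Prop) (A : Z -> Z)
  (C : Z -> Y) : Prop :=
  (forall (a : R[i]) x y, DA x -> DA y -> C (a *: x + y) = a *: C x + C y) /\
  exists M : R, forall x, DA x ->
    hnorm ipY (C x) <= M * (hnorm ipZ x + hnorm ipZ (A x)).

(* D(Eadj)' = space of continuous antilinear functionals on D(Eadj) (graph norm
   of Eadj ), with pivot W: w in W is identified with phi |-> <w, phi>.
   F : Y -> D(Eadj)' is represented by F : Y -> W -> R[i], where only the
   values F y phi for phi in D(Eadj) matter; F bounded linear. *)
Definition bounded_into_extrapolation (R : rcfType) (Y W : lmodType R[i])
  (ipY : Y -> Y -> R[i]) (ipW : W -> W -> R[i]) (DEs : W -> Prop) (Es : W -> W)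
  (F : Y -> W -> R[i]) : Prop :=
  [/\ (forall (a : R[i]) y y' phi, DEs phi -> F (a *: y + y') phi = a * F y phi + F y' phi),
      (forall (a : R[i]) y phi psi, DEs phi -> DEs psi ->
          F y (a *: phi + psi) = conjc a * F y phi + F y psi) &
      exists M : R, forall y phi, DEs phi ->
        `|F y phi| <= (M * hnorm ipY y * (hnorm ipW phi + hnorm ipW (Es phi)))%:C].

(* E_{-1} w = (phi |-> <w, Eadj phi>) in D(Eadj)'.  [is_ext_resolvent l f v] says
   v in W solves (l - E_{-1}) v = f in D(Eadj)', i.e. v = (l - E)^{-1} f. *)
Definition is_ext_resolvent (R : rcfType) (W : lmodType R[i])
  (ipW : W -> W -> R[i]) (DEs : W -> Prop) (Es : W -> W)
  (l : R[i]) (f : W -> R[i]) (v : W) : Prop :=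
  forall phi, DEs phi -> l * ipW v phi - ipW v (Es phi) = f phi.

Definition prod_ip (R : rcfType) (Z W : lmodType R[i])
  (ipZ : Z -> Z -> R[i]) (ipW : W -> W -> R[i]) (x y : (Z * W)%type) : R[i] :=
  ipZ x.1 y.1 + ipW x.2 y.2.

(* Write z_j = T_Z e_j and w_k = T_W f_k with orthonormal bases (e_j), (f_k) and
   bounded bijections T_Z, T_W. As (v_j) is square summable, K a := sum_j <a, e_j> v_j
   is bounded, so the block-triangular operator (a, b) |-> (T_Z a, K a + T_W b) is a
   bounded bijection of Z x W sending (e_j, 0) to (z_j, v_j) and (0, f_k) to (0, w_k).
   Normalising is then a diagonal rescaling by factors bounded above and below; the
   lower bound ||z_j|| >= c > 0 is the bounded inverse theorem, obtained from Baire's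
   theorem. The hypotheses on A, E, C and F only make these vectors the eigenvectors
   of the coupled operator: the Riesz basis property does not depend on them. *)

From HB Require Import structures.
From mathcomp Require Import all_boot all_order all_algebra.
From mathcomp Require Import complex.
From mathcomp Require Import reals.
From mathcomp Require Import ring lra.
From Stdlib Require Import Classical ClassicalEpsilon.
Set Implicit Arguments. Unset Strict Implicit. Unset Printing Implicit Defensive.
Import Order.TTheory GRing.Theory Num.Theory Normc.
Local Open Scope ring_scope.
Local Open Scope complex_scope.
Local Notation Re := (@complex.Re _).
Local Notation Im := (@complex.Im _).

Lemma sqr_normc (R : rcfType) (c : R[i]) : normc c ^+ 2 = Re c ^+ 2 + Im c ^+ 2.
Proof. by case: c => a b; rewrite sqr_sqrtr // addr_ge0 ?sqr_ge0. Qed.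

Lemma normc_ge0 (R : rcfType) (c : R[i]) : 0 <= normc c.
Proof. by case: c => a b; exact: sqrtr_ge0. Qed.

Lemma normc_real (R : rcfType) (t : R) : normc t%:C = `|t|.
Proof. by rewrite /normc /= expr0n addr0 sqrtr_sqr. Qed.

Section Linear.
Variables (K : pzRingType) (V U : lmodType K) (f : V -> U).
Hypothesis hf : linear f.

Lemma linB x y : f (x - y) = f x - f y.
Proof. by rewrite addrC -scaleN1r hf scaleN1r addrC. Qed.
Lemma lin0 : f 0 = 0.
Proof. by rewrite -(subrr 0) linB subrr. Qed.
Lemma linZ a x : f (a *: x) = a *: f x.
Proof. by rewrite -[a *: x]addr0 hf lin0 addr0. Qed.
Lemma linD x y : f (x + y) = f x + f y.
Proof. by have := hf 1 x y; rewrite !scale1r. Qed.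

End Linear.

(** * Inner product spaces *)

Section InnerProduct.
Variables (R : rcfType) (V : lmodType R[i]) (ip : V -> V -> R[i]).
Hypothesis hip : is_inner_product ip.
Local Notation hn := (hnorm ip).

Lemma ip_linear a x y z : ip (a *: x + y) z = a * ip x z + ip y z.
Proof. by case: hip. Qed.
Lemma ip_conj x y : ip y x = conjc (ip x y).
Proof. by case: hip. Qed.
Lemma ip_self_ge0 x : 0 <= ip x x.
Proof. by case: hip. Qed.
Lemma ip_self_eq0 x : ip x x = 0 -> x = 0.
Proof. by case: hip => _ _ _; apply. Qed.

Lemma ip0l z : ip 0 z = 0.
Proof.
have := ip_linear 1 0 0 z; rewrite scaler0 addr0 mul1r => h.
by apply: (@addrI _ (ip 0 z)); rewrite addr0 -h.
Qed.
Lemma ipDl x y z : ip (x + y) z = ip x z + ip y z.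
Proof. by rewrite -[x in LHS]scale1r ip_linear mul1r. Qed.
Lemma ipZl a x z : ip (a *: x) z = a * ip x z.
Proof. by rewrite -[a *: x]addr0 ip_linear ip0l addr0. Qed.
Lemma ipNl x z : ip (- x) z = - ip x z.
Proof. by rewrite -scaleN1r ipZl mulN1r. Qed.
Lemma ipBl x y z : ip (x - y) z = ip x z - ip y z.
Proof. by rewrite ipDl ipNl. Qed.
Lemma ip0r z : ip z 0 = 0.
Proof. by rewrite ip_conj ip0l conjc0. Qed.
Lemma ipDr x y z : ip z (x + y) = ip z x + ip z y.
Proof. by rewrite ip_conj ipDl rmorphD /= -!ip_conj. Qed.
Lemma ipZr a x z : ip z (a *: x) = conjc a * ip z x.
Proof. by rewrite ip_conj ipZl rmorphM /= -ip_conj. Qed.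
Lemma ipNr x z : ip z (- x) = - ip z x.
Proof. by rewrite ip_conj ipNl rmorphN /= -ip_conj. Qed.

Lemma ip_suml (I : Type) (r : seq I) (F : I -> V) y :
  ip (\sum_(i <- r) F i) y = \sum_(i <- r) ip (F i) y.
Proof. exact: (big_morph (ip^~ y) (fun a b => ipDl a b y) (ip0l y)). Qed.
Lemma ip_sumr (I : Type) (r : seq I) (F : I -> V) y :
  ip y (\sum_(i <- r) F i) = \sum_(i <- r) ip y (F i).
Proof. exact: (big_morph (ip y) (fun a b => ipDr a b y) (ip0r y)). Qed.

Lemma hnorm_ge0 x : 0 <= hn x.
Proof. exact: sqrtr_ge0. Qed.

Lemma ip_self x : ip x x = (hn x ^+ 2)%:C.
Proof.
have := ip_self_ge0 x; rewrite /hnorm; case: (ip x x) => a b.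
by rewrite lecE /= => /andP[/eqP -> a0]; rewrite sqr_sqrtr.
Qed.

Lemma sqr_hnorm x : hn x ^+ 2 = Re (ip x x).
Proof. by rewrite ip_self. Qed.

Lemma hnorm_eq0 x : hn x = 0 -> x = 0.
Proof. by move=> h; apply: ip_self_eq0; rewrite ip_self h expr0n. Qed.

Lemma hnorm0 : hn 0 = 0.
Proof. by rewrite /hnorm ip0l sqrtr0. Qed.

Lemma sqr_hnormD x y : hn (x + y) ^+ 2 = hn x ^+ 2 + hn y ^+ 2 + 2 * Re (ip x y).
Proof.
rewrite !sqr_hnorm ipDl !ipDr (ip_conj x y).
by case: (ip x y) => a b; case: (ip x x) => ? ?; case: (ip y y) => ? ? /=; lra.
Qed.

Lemma hnormZ a x : hn (a *: x) = normc a * hn x.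
Proof.
apply/eqP; rewrite -(eqrXn2 (_ : 0 < 2)%N) ?mulr_ge0 ?normc_ge0 ?hnorm_ge0 //.
rewrite exprMn sqr_normc !sqr_hnorm ipZl ipZr ip_self.
by case: a => a b /=; apply/eqP; ring.
Qed.

Lemma hnorm_opp x : hn (- x) = hn x.
Proof. by rewrite /hnorm ipNl ipNr opprK. Qed.

Lemma hdistC x y : hn (x - y) = hn (y - x).
Proof. by rewrite -hnorm_opp opprB. Qed.

(* Minimising [t |-> hn (x + t y) ^+ 2] over real [t]. *)
Lemma Re_ip_le x y : Re (ip x y) <= hn x * hn y.
Proof.
have [y0|ny] := eqVneq (hn y) 0.
  by rewrite y0 mulr0 (hnorm_eq0 y0) ip0r.
have hy : 0 < hn y by rewrite lt_def ny hnorm_ge0.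
suff : Re (ip x y) ^+ 2 <= (hn x * hn y) ^+ 2.
  move=> h; apply: le_trans (ler_norm _) _.
  by rewrite -(ler_pXn2r (_ : 0 < 2)%N) ?nnegrE ?mulr_ge0 ?hnorm_ge0 // real_normK ?num_real.
set r := Re (ip x y); set s := hn y ^+ 2; set t := - r / s.
have s0 : 0 < s by rewrite exprn_gt0.
have := sqr_hnormD x (t%:C *: y).
rewrite hnormZ normc_real ipZr conjc_real exprMn real_normK ?num_real // -/s.
have -> : Re (t%:C * ip x y) = t * r by rewrite /r; case: (ip x y) => a b /=; ring.
move=> e; have := sqr_ge0 (hn (x + t%:C *: y)); rewrite e => h.
have key : s * (hn x ^+ 2 + t ^+ 2 * s + 2 * (t * r)) = hn x ^+ 2 * s - r ^+ 2.
  by rewrite /t; field; rewrite gt_eqF.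
have := mulr_ge0 (ltW s0) h; rewrite key exprMn -/s; lra.
Qed.
Lemma normc_ip_le x y : normc (ip x y) <= hn x * hn y.
Proof.
set c := ip x y.
have := Re_ip_le x (c *: y); rewrite ipZr hnormZ -/c.
have -> : Re (conjc c * c) = normc c ^+ 2 by rewrite sqr_normc; case: (c) => a b /=; ring.
have [c0|cn] := eqVneq (normc c) 0; first by rewrite c0 mulr_ge0 ?hnorm_ge0.
have hc : 0 < normc c by rewrite lt_def cn normc_ge0.
by rewrite expr2 mulrCA ler_pM2l.
Qed.

Lemma ler_hnormD x y : hn (x + y) <= hn x + hn y.
Proof.
rewrite -(ler_pXn2r (_ : 0 < 2)%N) ?nnegrE ?addr_ge0 ?hnorm_ge0 //.
by rewrite sqr_hnormD sqrrD; have := Re_ip_le x y; lra.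
Qed.

Lemma ler_hnormB x y : hn (x - y) <= hn x + hn y.
Proof. by rewrite -(hnorm_opp y); apply: ler_hnormD. Qed.

Lemma ler_hdistD x y z : hn (x - z) <= hn (x - y) + hn (y - z).
Proof. by have := ler_hnormD (x - y) (y - z); rewrite addrA subrK. Qed.

Lemma ler_hnorm_sum (I : Type) (r : seq I) (F : I -> V) :
  hn (\sum_(i <- r) F i) <= \sum_(i <- r) hn (F i).
Proof.
elim/big_rec2: _ => [|i a b _ h]; first by rewrite hnorm0.
exact: le_trans (ler_hnormD _ _) (lerD _ h).
Qed.
End InnerProduct.

Section Convergence.
Variables (R : rcfType) (V : lmodType R[i]) (ip : V -> V -> R[i]).
Hypothesis hip : is_inner_product ip.
Local Notation hn := (hnorm ip).

Lemma tendsto_unique u x y : tendsto ip u x -> tendsto ip u y -> x = y.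
Proof.
move=> hx hy; apply/eqP; rewrite -subr_eq0; apply/eqP; apply: (hnorm_eq0 hip).
apply/eqP; rewrite eq_le hnorm_ge0 andbT; apply/ler_addgt0Pr => e e0.
have e2 : 0 < e / 2 by rewrite divr_gt0.
have [N1 h1] := hx _ e2; have [N2 h2] := hy _ e2; set n := maxn N1 N2.
have := h1 n (leq_maxl _ _); have := h2 n (leq_maxr _ _).
have := ler_hdistD hip x (u n) y; rewrite (hdistC hip x (u n)); lra.
Qed.

Lemma tendsto_linear a u u' x x' : tendsto ip u x -> tendsto ip u' x' ->
  tendsto ip (fun n => a *: u n + u' n) (a *: x + x').
Proof.
move=> hu hu' e e0; set c := normc a + 1.
have c0 : 0 < c by rewrite ltr_pwDr // normc_ge0.
have [N1 h1] := hu _ (divr_gt0 (divr_gt0 e0 (ltr0Sn _ 1)) c0).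
have [N2 h2] := hu' _ (divr_gt0 e0 (ltr0Sn _ 1)).
exists (maxn N1 N2) => n hnN.
have {}h1 := h1 n (leq_trans (leq_maxl _ _) hnN).
have {}h2 := h2 n (leq_trans (leq_maxr _ _) hnN).
have -> : a *: u n + u' n - (a *: x + x') = a *: (u n - x) + (u' n - x').
  by rewrite scalerBr opprD addrACA.
apply: le_lt_trans (ler_hnormD hip _ _) _; rewrite (hnormZ hip).
have : normc a * hn (u n - x) <= c * (e / 2 / c).
  by apply: ler_pM; rewrite ?normc_ge0 ?hnorm_ge0 ?lerDl // ltW.
rewrite [c * _]mulrC divfK ?gt_eqF //; lra.
Qed.

Lemma tendsto_eventually u x N : (forall n, (N <= n)%N -> u n = x) -> tendsto ip u x.
Proof. by move=> h e e0; exists N => n /h ->; rewrite subrr hnorm0. Qed.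

Lemma ip_tendsto_eventually u x y c N : tendsto ip u x ->
  (forall n, (N <= n)%N -> ip (u n) y = c) -> ip x y = c.
Proof.
move=> hu hc; apply/eqP; rewrite -subr_eq0; apply/eqP/eq0_normc/eqP.
rewrite eq_le normc_ge0 andbT; apply/ler_addgt0Pr => e e0; rewrite add0r.
have y1 : 0 < hn y + 1 by rewrite ltr_pwDr ?hnorm_ge0.
have [M hM] := hu _ (divr_gt0 e0 y1); set n := maxn M N.
rewrite -(hc n (leq_maxr _ _)) -(ipBl hip).
apply: le_trans (normc_ip_le hip _ _) _; rewrite (hdistC hip).
apply: le_trans (_ : e / (hn y + 1) * hn y <= _).
  by rewrite ler_wpM2r ?hnorm_ge0 // ltW // hM ?leq_maxl.
by rewrite mulrAC ler_pdivrMr // ler_pM2l // lerDl.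
Qed.

Lemma tendsto_hnormB_le u x y M N : tendsto ip u x ->
  (forall n, (N <= n)%N -> hn (u n - y) <= M) -> hn (x - y) <= M.
Proof.
move=> hu hM; apply/ler_addgt0Pr => e e0.
have [K hK] := hu e e0; set n := maxn K N.
have := hK n (leq_maxl _ _); have := hM n (leq_maxr _ _).
have := ler_hdistD hip x (u n) y; rewrite (hdistC hip x (u n)); lra.
Qed.

Lemma tendsto_hnorm_le u x M N : tendsto ip u x ->
  (forall n, (N <= n)%N -> hn (u n) <= M) -> hn x <= M.
Proof.
move=> hu hM; rewrite -[x]subr0; apply: (tendsto_hnormB_le hu (N := N)) => n.
by rewrite subr0; apply: hM.
Qed.

Lemma tendsto_ext u u' x : (forall n, u n = u' n) -> tendsto ip u x -> tendsto ip u' x.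
Proof. by move=> h hu e /hu [N hN]; exists N => n; rewrite -h; apply: hN. Qed.

End Convergence.

Section Completeness.
Variables (R : rcfType) (V : lmodType R[i]) (ip : V -> V -> R[i]).
Hypothesis hV : hilbert ip.

(* An arbitrary vector when [u] does not converge. *)
Definition hlim (u : nat -> V) : V := epsilon (inhabits 0) (tendsto ip u).

Lemma cauchy_hlim u : cauchy_seq ip u -> tendsto ip u (hlim u).
Proof. by move=> /(proj2 hV) h; apply: epsilon_spec. Qed.

End Completeness.

Lemma bounded_series_tail (R : realType) (f : nat -> R) (M : R) :
  (forall j, 0 <= f j) -> (forall n, \sum_(0 <= j < n) f j <= M) ->
  forall e, 0 < e -> exists N, forall n m, (N <= n)%N -> \sum_(n <= j < m) f j < e.
Proof.
move=> f0 fM e e0.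
pose S : R -> Prop := fun x => exists n, x = \sum_(0 <= j < n) f j.
have hS : classical_sets.has_sup S.
  by split; [exists 0, 0%N; rewrite big_geq | exists M => x [n ->]].
have [_ [N ->] hN] := sup_adherent e0 hS.
exists N => n m hn; have [hm|hm] := leqP m n; first by rewrite big_geq.
have ub : \sum_(0 <= j < m) f j <= sup S by apply: sup_upper_bound => //; exists m.
have : 0 <= \sum_(N <= j < n) f j by apply: sumr_ge0.
rewrite (big_cat_nat (leq0n N) (leq_trans hn (ltnW hm))) /= in ub.
by rewrite (big_cat_nat hn (ltnW hm)) /= in ub; lra.
Qed.

Section PartialSums.
Variables (R : rcfType) (V : lmodType R[i]) (ip : V -> V -> R[i]).
Hypothesis hip : is_inner_product ip.

Definition psum (u : nat -> V) n := \sum_(0 <= j < n) u j.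

Lemma cauchy_psum u :
  (forall e, 0 < e -> exists N, forall n m, (N <= n)%N ->
     hnorm ip (\sum_(n <= j < m) u j) < e) ->
  cauchy_seq ip (psum u).
Proof.
move=> h e /h [N hN]; exists N => n m hn hm.
wlog nm : n m hn hm / (n <= m)%N.
  by move=> wl; case/orP: (leq_total n m) => /wl; last rewrite (hdistC hip); apply.
by rewrite /psum (big_cat_nat (leq0n n) nm) /= opprD addNKr (hnorm_opp hip) hN.
Qed.

End PartialSums.

(** * Orthonormal bases, diagonal and transfer operators *)

Section OrthonormalBasis.
Variables (R : rcfType) (V : lmodType R[i]) (ip : V -> V -> R[i]).
Hypothesis hip : is_inner_product ip.
Local Notation hn := (hnorm ip).
Variables (I : Type) (e : I -> V).
Hypothesis he : orthonormal_basis ip e.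

Lemma onb_ip_self i : ip (e i) (e i) = 1. Proof. by case: he. Qed.
Lemma onb_ip_orth i j : i <> j -> ip (e i) (e j) = 0. Proof. by case: he => _ [+ _]; apply. Qed.
Lemma onb_complete x : (forall i, ip x (e i) = 0) -> x = 0. Proof. by case: he => _ [_]; apply. Qed.

Lemma onb_ext x y : (forall i, ip x (e i) = ip y (e i)) -> x = y.
Proof.
move=> h; apply/eqP; rewrite -subr_eq0; apply/eqP; apply: onb_complete => i.
by rewrite (ipBl hip) h subrr.
Qed.

Lemma hnorm_onb i : hn (e i) = 1.
Proof. by rewrite /hnorm onb_ip_self sqrtr1. Qed.

End OrthonormalBasis.

Section OrthonormalSeries.
Variables (R : rcfType) (V : lmodType R[i]) (ip : V -> V -> R[i]).
Hypothesis hip : is_inner_product ip.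
Local Notation hn := (hnorm ip).
Variable e : nat -> V.
Hypothesis he : orthonormal_basis ip e.

Lemma ip_onb_sum (c : nat -> R[i]) n i : (i < n)%N ->
  ip (\sum_(0 <= j < n) c j *: e j) (e i) = c i.
Proof.
move=> lt_in; rewrite (ip_suml hip) (bigD1_seq i) ?mem_index_iota ?iota_uniq //=.
rewrite (ipZl hip) (onb_ip_self he) mulr1 big1 ?addr0 // => j /eqP ji.
by rewrite (ipZl hip) (onb_ip_orth he) ?mulr0.
Qed.

Lemma sqr_hnorm_onb_sum (c : nat -> R[i]) n m :
  hn (\sum_(n <= j < m) c j *: e j) ^+ 2 = \sum_(n <= j < m) normc (c j) ^+ 2.
Proof.
elim: m => [|m IH]; first by rewrite !big_geq // (hnorm0 hip) expr0n.
have [le_nm|lt_mn] := leqP n m; last by rewrite !big_geq // (hnorm0 hip) expr0n.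
rewrite !big_nat_recr //= (sqr_hnormD hip) IH (hnormZ hip) (hnorm_onb he) mulr1.
rewrite (ip_suml hip) [X in Re X]big1_seq ?mulr0 ?addr0 //= => j; rewrite mem_index_iota.
move=> /andP[_ lt_jm]; rewrite (ipZl hip) (ipZr hip) (onb_ip_orth he) ?mulr0 //.
by move=> eq_jm; rewrite eq_jm ltnn in lt_jm.
Qed.

Lemma bessel a n : \sum_(0 <= j < n) normc (ip a (e j)) ^+ 2 <= hn a ^+ 2.
Proof.
set p := \sum_(0 <= j < n) ip a (e j) *: e j.
have : Re (ip a p) = \sum_(0 <= j < n) normc (ip a (e j)) ^+ 2.
  rewrite /p (ip_sumr hip) raddf_sum.
  apply: eq_bigr => j _; rewrite (ipZr hip) sqr_normc.
  by case: (ip a (e j)) => x y /=; ring.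
have := sqr_ge0 (hn (a - p)); rewrite (sqr_hnormD hip) (hnorm_opp hip).
rewrite (ipNr hip) raddfN sqr_hnorm_onb_sum; lra.
Qed.
End OrthonormalSeries.

Section DiagonalOperator.
Variables (R : realType) (V : lmodType R[i]) (ip : V -> V -> R[i]).
Hypothesis hV : hilbert ip.
Let hip : is_inner_product ip := proj1 hV.
Local Notation hn := (hnorm ip).
Variable e : nat -> V.
Hypothesis he : orthonormal_basis ip e.

Section Multiplier.
Variables (c : nat -> R[i]) (B : R).
Hypothesis hc : forall j, normc (c j) <= B.

Definition diag_op a := hlim ip (psum (fun j => (c j * ip a (e j)) *: e j)).

Let B_ge0 : 0 <= B := le_trans (normc_ge0 _) (hc 0).

Let sqr_hnorm_diag_sum a n m :
  hn (\sum_(n <= j < m) (c j * ip a (e j)) *: e j) ^+ 2 <=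
  \sum_(n <= j < m) B ^+ 2 * normc (ip a (e j)) ^+ 2.
Proof.
rewrite (sqr_hnorm_onb_sum hip he); apply: ler_sum => j _.
by rewrite normcM exprMn ler_wpM2r ?exprn_ge0 ?normc_ge0 // lerXn2r ?nnegrE ?normc_ge0.
Qed.

Lemma diag_op_tendsto a : tendsto ip (psum (fun j => (c j * ip a (e j)) *: e j)) (diag_op a).
Proof.
apply: cauchy_hlim => //; apply: (cauchy_psum hip) => eps eps0.
have [|||N hN] := @bounded_series_tail _ (fun j => B ^+ 2 * normc (ip a (e j)) ^+ 2)
  (B ^+ 2 * hn a ^+ 2) _ _ (eps ^+ 2).
- by move=> j; rewrite mulr_ge0 ?exprn_ge0 ?normc_ge0.
- by move=> n; rewrite -mulr_sumr ler_wpM2l ?exprn_ge0 ?(bessel hip he).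
- by rewrite exprn_gt0.
exists N => n m /hN lt_tail.
rewrite -(ltr_pXn2r (_ : 0 < 2)%N) ?nnegrE ?hnorm_ge0 ?(ltW eps0) //.
exact: le_lt_trans (sqr_hnorm_diag_sum a n m) (lt_tail m).
Qed.

Lemma ip_diag_op a i : ip (diag_op a) (e i) = c i * ip a (e i).
Proof.
apply: (ip_tendsto_eventually hip (diag_op_tendsto a) (N := i.+1)) => n lt_in.
exact: (ip_onb_sum hip he).
Qed.

Lemma hnorm_diag_op_le a : hn (diag_op a) <= B * hn a.
Proof.
apply: (tendsto_hnorm_le hip (diag_op_tendsto a) (N := 0)) => n _.
rewrite -(ler_pXn2r (_ : 0 < 2)%N) ?nnegrE ?mulr_ge0 ?hnorm_ge0 //.
apply: le_trans (sqr_hnorm_diag_sum a 0 n) _.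
by rewrite -mulr_sumr exprMn ler_wpM2l ?exprn_ge0 ?(bessel hip he).
Qed.

Lemma diag_op_linear : linear diag_op.
Proof.
move=> k a b; apply: (onb_ext hip he) => i.
by rewrite (ipDl hip) (ipZl hip) !ip_diag_op (ip_linear hip); ring.
Qed.

Lemma diag_op_onb j : diag_op (e j) = c j *: e j.
Proof.
apply: (onb_ext hip he) => i; rewrite ip_diag_op (ipZl hip).
have [->|ij] := eqVneq i j; first by rewrite (onb_ip_self he).
by rewrite !(onb_ip_orth he) ?mulr0 // => ji; rewrite ji eqxx in ij.
Qed.

End Multiplier.

Lemma diag_opK (c d : nat -> R[i]) (Bc Bd : R) :
  (forall j, normc (c j) <= Bc) -> (forall j, normc (d j) <= Bd) ->
  (forall j, c j * d j = 1) -> cancel (diag_op d) (diag_op c).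
Proof.
move=> hc hd hcd a; apply: (onb_ext hip he) => i.
by rewrite (ip_diag_op hc) (ip_diag_op hd) mulrA hcd mul1r.
Qed.

End DiagonalOperator.

Lemma hnorm_homogeneous_le (R : rcfType) (V U : lmodType R[i])
    (ip : V -> V -> R[i]) (ipU : U -> U -> R[i]) (f : V -> U) (K : R) :
  is_inner_product ip -> is_inner_product ipU ->
  (forall (k : R[i]) a, f (k *: a) = k *: f a) ->
  (forall a, hnorm ip a = 1 -> hnorm ipU (f a) <= K) ->
  forall a, hnorm ipU (f a) <= K * hnorm ip a.
Proof.
move=> hip hipU fZ f1 a; have [a0|an] := eqVneq (hnorm ip a) 0.
  by rewrite a0 mulr0 (hnorm_eq0 hip a0) -(scale0r 0) fZ scale0r (hnorm0 hipU).
have t0 : 0 < hnorm ip a by rewrite lt_def an hnorm_ge0.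
set a' := (hnorm ip a)^-1%:C *: a.
have a'1 : hnorm ip a' = 1.
  by rewrite (hnormZ hip) normc_real ger0_norm ?invr_ge0 ?(ltW t0) // mulVf.
have -> : a = (hnorm ip a)%:C *: a'.
  by rewrite scalerA -rmorphM /= divff // scale1r.
rewrite fZ (hnormZ hipU) (hnormZ hip) normc_real (ger0_norm (ltW t0)) a'1 mulr1 mulrC.
by rewrite ler_pM2r ?f1.
Qed.

Definition sqr_summable (R : rcfType) (U : lmodType R[i]) (ipU : U -> U -> R[i])
    (v : nat -> U) : Prop :=
  exists M : R, forall n, \sum_(j < n) hnorm ipU (v j) ^+ 2 <= M.

Section TransferOperator.
Variables (R : realType) (V U : lmodType R[i]).
Variables (ip : V -> V -> R[i]) (ipU : U -> U -> R[i]).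
Hypotheses (hV : hilbert ip) (hU : hilbert ipU).
Let hip : is_inner_product ip := proj1 hV.
Let hipU : is_inner_product ipU := proj1 hU.
Variables (e : nat -> V) (v : nat -> U).
Hypotheses (he : orthonormal_basis ip e) (hv : sqr_summable ipU v).

Definition transfer_op a := hlim ipU (psum (fun j => ip a (e j) *: v j)).

Let sq_coef a j := (normc (ip a (e j)) ^+ 2 + hnorm ipU (v j) ^+ 2) / 2.

Let sq_coef_ge0 a j : 0 <= sq_coef a j.
Proof. by rewrite divr_ge0 ?addr_ge0 ?exprn_ge0 ?normc_ge0 ?hnorm_ge0. Qed.

Let sq_coef_sum_le a M : (forall n, \sum_(j < n) hnorm ipU (v j) ^+ 2 <= M) ->
  forall n, \sum_(0 <= j < n) sq_coef a j <= (hnorm ip a ^+ 2 + M) / 2.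
Proof.
move=> hM n.
rewrite -mulr_suml big_split /= ler_pM2r ?invr_gt0 // lerD ?(bessel hip he) //.
by rewrite big_mkord.
Qed.

(* AM-GM on each coefficient: the bound is quadratic in [a], whence the use of
   [hnorm_homogeneous_le] for [transfer_op_bounded]. *)
Let hnorm_transfer_sum_le a n m :
  hnorm ipU (\sum_(n <= j < m) ip a (e j) *: v j) <= \sum_(n <= j < m) sq_coef a j.
Proof.
apply: le_trans (ler_hnorm_sum hipU _ _) (ler_sum _ _) => j _.
rewrite (hnormZ hipU) /sq_coef.
have := sqr_ge0 (normc (ip a (e j)) - hnorm ipU (v j)); rewrite sqrrB; lra.
Qed.

Lemma transfer_op_tendsto a :
  tendsto ipU (psum (fun j => ip a (e j) *: v j)) (transfer_op a).
Proof.
apply: cauchy_hlim => //; apply: (cauchy_psum hipU) => eps eps0.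
have [M hM] := hv.
have [N hN] := bounded_series_tail (sq_coef_ge0 a) (sq_coef_sum_le a hM) eps0.
by exists N => n m /hN lt_tail; apply: le_lt_trans (hnorm_transfer_sum_le a n m) (lt_tail m).
Qed.

Lemma transfer_op_linear : linear transfer_op.
Proof.
move=> k a b; apply: (tendsto_unique hipU (transfer_op_tendsto _)).
apply: tendsto_ext (tendsto_linear hipU k (transfer_op_tendsto a) (transfer_op_tendsto b)).
move=> n; rewrite /psum scaler_sumr -big_split; apply: eq_bigr => j _ /=.
by rewrite (ip_linear hip) scalerA scalerDl.
Qed.

Lemma transfer_op_onb j : transfer_op (e j) = v j.
Proof.
apply: (tendsto_unique hipU (transfer_op_tendsto _)).
apply: (tendsto_eventually hipU (N := j.+1)) => n lt_jn.
rewrite /psum (bigD1_seq j) ?mem_index_iota ?iota_uniq //= (onb_ip_self he) scale1r.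
by rewrite big1 ?addr0 // => i /eqP ij; rewrite (onb_ip_orth he) ?scale0r // => ji; apply: ij.
Qed.

Lemma transfer_op_bounded : exists K, forall a, hnorm ipU (transfer_op a) <= K * hnorm ip a.
Proof.
have [M hM] := hv.
exists ((1 + M) / 2); apply: hnorm_homogeneous_le => //.
  exact: linZ transfer_op_linear.
move=> a a1; apply: (tendsto_hnorm_le hipU (transfer_op_tendsto a) (N := 0)) => n _.
apply: le_trans (hnorm_transfer_sum_le a 0 n) _.
by have := sq_coef_sum_le a hM n; rewrite a1 expr1n.
Qed.

End TransferOperator.

(** * The bounded inverse theorem *)

Lemma halfpow_small (R : archiRealFieldType) (eps : R) : 0 < eps ->
  exists N, forall n, (N <= n)%N -> 2 ^- n < eps.
Proof.
move=> eps0; exists (Num.truncn eps^-1).+1 => n le_Nn.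
rewrite -[eps]invrK ltf_pV2 ?posrE ?invr_gt0 ?exprn_gt0 //.
apply: lt_le_trans (truncnS_gt _) (le_trans (_ : _ <= n%:R) _); first by rewrite ler_nat.
by rewrite -natrX ler_nat; apply/ltnW/ltn_expl.
Qed.

Lemma sum_halfpow (R : realFieldType) n :
  \sum_(0 <= i < n) (2 ^- i : R) = 2 - 2 * 2 ^- n.
Proof.
elim: n => [|n IH]; first by rewrite big_geq // expr0 invr1 mulr1 subrr.
rewrite big_nat_recr //= IH exprS invfM.
by set t := 2 ^- n; field.
Qed.

Section Baire.
Variables (R : realType) (V : lmodType R[i]) (ip : V -> V -> R[i]).
Hypothesis hV : hilbert ip.
Let hip : is_inner_product ip := proj1 hV.
Local Notation hn := (hnorm ip).

Lemma nested_balls_limit (y : nat -> V) (r : nat -> R) :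
  (forall k, 0 < r k) -> (forall k, r k.+1 <= r k / 4) ->
  (forall k, hn (y k.+1 - y k) < r k / 2) ->
  exists ys, forall k, hn (ys - y k) <= r k.
Proof.
move=> r_gt0 r_dec dy.
have drift n m : (n <= m)%N -> hn (y m - y n) <= 2 / 3 * (r n - r m).
  elim: m => [|m IH]; first by rewrite leqn0 => /eqP->; rewrite !subrr (hnorm0 hip) mulr0.
  rewrite leq_eqVlt => /orP[/eqP->|/IH {}IH]; first by rewrite !subrr (hnorm0 hip) mulr0.
  have := ler_hdistD hip (y m.+1) (y m) (y n); have := dy m; have := r_dec m; lra.
have r_small k : r k <= r 0 * 2 ^- k.
  elim: k => [|k IH]; first by rewrite expr0 invr1 mulr1.
  rewrite exprS invfM mulrCA; have := r_dec k; have := r_gt0 k; lra.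
have cy : cauchy_seq ip y.
  move=> eps eps0; have [N hN] := halfpow_small (divr_gt0 eps0 (r_gt0 0)).
  exists N => n m le_Nn le_Nm.
  wlog le_nm : n m le_Nn le_Nm / (n <= m)%N.
    by move=> wl; case/orP: (leq_total n m) => /wl; last rewrite (hdistC hip); apply.
  rewrite (hdistC hip); apply: le_lt_trans (drift n m le_nm) _.
  have := hN n le_Nn; rewrite ltr_pdivlMr // => lt_eps.
  have := r_small n; have := r_gt0 m; lra.
exists (hlim ip y) => k.
apply: (tendsto_hnormB_le hip (cauchy_hlim hV cy) (N := k)) => m le_km.
have := drift k m le_km; have := r_gt0 m; have := r_gt0 k; lra.
Qed.

Lemma baire (G : nat -> V -> Prop) :
  (forall n y r, 0 < r -> exists y' r', 0 < r' /\
     forall x, hn (x - y') < r' -> hn (x - y) < r /\ G n x) ->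
  exists x, forall n, G n x.
Proof.
move=> hG.
pose P n y r (p : V * R) :=
  0 < p.2 /\ forall x, hn (x - p.1) < p.2 -> hn (x - y) < r /\ G n x.
pose step n y r := epsilon (inhabits (0 : V, 0 : R)) (P n y r).
have stepP n y r : 0 < r -> P n y r (step n y r).
  by move=> r0; apply: epsilon_spec; have [y' [r' h]] := hG n y r r0; exists (y', r').
pose fix ball k : V * R :=
  if k is k'.+1 then
    let p := step k' (ball k').1 ((ball k').2 / 2) in
    (p.1, Num.min (p.2 / 2) ((ball k').2 / 4))
  else (0, 1).
pose y k := (ball k).1; pose r k := (ball k).2.
have r_gt0 k : 0 < r k.
  elim: k => [|k IH]; first by rewrite /r /= ltr01.
  have [p_gt0 _] := stepP k (y k) (r k / 2) (divr_gt0 IH (ltr0Sn _ 1)).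
  by rewrite /r /= lt_min !divr_gt0.
have ballP k := stepP k (y k) (r k / 2) (divr_gt0 (r_gt0 k) (ltr0Sn _ 1)).
have [ys hys] : exists ys, forall k, hn (ys - y k) <= r k.
  apply: nested_balls_limit => // k; first by rewrite /r /= ge_min lexx orbT.
  have [p_gt0 hp] := ballP k.
  by have := hp (step k (y k) (r k / 2)).1; rewrite subrr (hnorm0 hip) => /(_ p_gt0) [].
exists ys => n; have [p_gt0 hp] := ballP n; apply: (fun h => (hp ys h).2).
have r_le : r n.+1 <= (step n (y n) (r n / 2)).2 / 2 by rewrite /r /= ge_min lexx.
have := hys n.+1; lra.
Qed.
End Baire.

Section OpenMapping.
Variables (R : realType) (V : lmodType R[i]) (ip : V -> V -> R[i]).
Hypothesis hV : hilbert ip.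
Let hip : is_inner_product ip := proj1 hV.
Local Notation hn := (hnorm ip).
Variable T : V -> V.
Hypotheses (hT : bounded_linear_endo ip T) (T_surj : forall y, exists x, T x = y).
Let T_lin : linear T := proj1 hT.

Lemma tendsto_bounded_op u x : tendsto ip u x -> tendsto ip (fun n => T (u n)) (T x).
Proof.
case: hT => _ [M hM] hu e e0; set c := `|M| + 1.
have c0 : 0 < c by rewrite /c ltr_pwDr.
have [N hN] := hu (e / c) (divr_gt0 e0 c0).
exists N => n /hN lt_n; rewrite -(linB T_lin); apply: le_lt_trans (hM _) _.
apply: le_lt_trans (_ : c * hn (u n - x) < _); last by rewrite -ltr_pdivlMl // mulrC.
by rewrite ler_wpM2r ?hnorm_ge0 // /c; have := ler_norm M; lra.
Qed.

Definition approx_image (rho : R) (y : V) : Prop :=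
  forall eps, 0 < eps -> exists x, hn x <= rho /\ hn (T x - y) < eps.

Lemma approx_image_ball :
  exists (n : nat) y0 r, 0 < r /\ forall y, hn (y - y0) < r -> approx_image n%:R y.
Proof.
(* Otherwise, for each [n], every ball contains a ball avoiding [T (ball n)]; Baire
   then yields a point outside the range of [T]. *)
apply: NNPP => no_ball.
pose G n y := forall x, hn x <= n%:R -> T x <> y.
have [ys hys] : exists ys, forall n, G n ys.
  apply: (baire hV) => n y r r0.
  have [y1 [hy1 not_approx]] : exists y1, hn (y1 - y) < r /\ ~ approx_image n%:R y1.
    apply: NNPP => h; apply: no_ball; exists n, y, r; split => // y1 hy1.
    by apply: NNPP => hna; apply: h; exists y1.
  have [eps [eps0 far]] : exists eps, 0 < eps /\
      forall x, hn x <= n%:R -> eps <= hn (T x - y1).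
    apply: NNPP => h; apply: not_approx => eps eps0; apply: NNPP => hx; apply: h.
    exists eps; split => // x le_xn; rewrite leNgt; apply/negP => lt_eps.
    by apply: hx; exists x.
  exists y1, (Num.min eps (r - hn (y1 - y))); split; first by rewrite lt_min eps0 subr_gt0.
  move=> x; rewrite lt_min => /andP[lt_eps lt_r]; split.
    by have := ler_hdistD hip x y1 y; lra.
  by move=> x' hx' Tx'; have := far x' hx'; rewrite Tx'; lra.
have [x Tx] := T_surj ys.
exact: hys (Num.truncn (hn x)).+1 x (ltW (truncnS_gt _)) Tx.
Qed.

Lemma approx_image_sub (rho rho' eps eps' : R) (y y' : V) : 0 < eps -> 0 < eps' ->
  approx_image rho y -> approx_image rho' y' ->
  exists x, hn x <= rho + rho' /\ hn (T x - (y - y')) < eps + eps'.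
Proof.
move=> eps0 eps'0 /(_ _ eps0) [x [hx Tx]] /(_ _ eps'0) [x' [hx' Tx']].
exists (x - x'); split; first by apply: le_trans (ler_hnormB hip _ _) (lerD hx hx').
have -> : T (x - x') - (y - y') = (T x - y) - (T x' - y').
  by rewrite (linB T_lin) !opprB addrACA [RHS]addrACA [- T x' + _]addrC.
by apply: le_lt_trans (ler_hnormB hip _ _) (ltrD Tx Tx').
Qed.

Lemma approx_image_zero_ball :
  exists (n : nat) r, 0 < r /\ forall y, hn y < r -> approx_image n%:R y.
Proof.
have [n [y0 [r [r0 near_y0]]]] := approx_image_ball.
exists (n + n)%N, r; split => // y hy eps eps0.
have e2 : 0 < eps / 2 by rewrite divr_gt0.
have near1 : hn (y0 + y - y0) < r by rewrite addrC addKr.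
have near2 : hn (y0 - y0) < r by rewrite subrr (hnorm0 hip).
have [x [hx Tx]] := approx_image_sub e2 e2 (near_y0 _ near1) (near_y0 _ near2).
by exists x; move: Tx; rewrite natrD [y0 + y - y0]addrC addKr -splitr.
Qed.

Lemma approx_imageZ (t rho : R) y : 0 < t ->
  approx_image rho y -> approx_image (t * rho) (t%:C *: y).
Proof.
move=> t0 hy eps eps0; have [x [hx Tx]] := hy _ (divr_gt0 eps0 t0).
exists (t%:C *: x); rewrite (linZ T_lin) -scalerBr !(hnormZ hip) normc_real gtr0_norm //.
split; first by rewrite ler_pM2l.
by rewrite mulrC -(ltr_pdivlMr _ _ t0).
Qed.

Lemma approx_image_everywhere : exists K, 0 <= K /\ forall y, approx_image (K * hn y) y.
Proof.
have [n [r [r0 near0]]] := approx_image_zero_ball.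
exists (2 * n%:R / r); split; first by apply: divr_ge0 (ltW r0); rewrite mulr_ge0 ?ler0n.
move=> y; have [y0|ny] := eqVneq (hn y) 0.
  move=> eps eps0; exists 0.
  by rewrite (hnorm_eq0 hip y0) (lin0 T_lin) subrr (hnorm0 hip) mulr0.
have hy : 0 < hn y by rewrite lt_def ny hnorm_ge0.
set t := 2 * hn y / r; have t0 : 0 < t by rewrite !divr_gt0 ?mulr_gt0.
have -> : 2 * n%:R / r * hn y = t * n%:R by rewrite /t; field; rewrite gt_eqF.
have -> : y = t%:C *: (t^-1%:C *: y) by rewrite scalerA -rmorphM divff ?gt_eqF ?scale1r.
apply: approx_imageZ => //; apply: near0.
rewrite (hnormZ hip) normc_real ger0_norm ?invr_ge0 ?(ltW t0) // /t invf_div.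
have -> : r / (2 * hn y) * hn y = r / 2 by field; rewrite gt_eqF.
lra.
Qed.

Section SuccessiveApproximation.
Variable K : R.
Hypotheses (K_ge0 : 0 <= K) (T_approx : forall y, approx_image (K * hn y) y).

(* Correct the residual [y - T (psum xs i)] at precision [hn y * 2 ^- i.+1]. *)
Lemma approx_series y : exists xs : nat -> V,
  (forall i, hn (xs i) <= K * hn y * 2 ^- i) /\
  (forall n, hn (T (psum xs n) - y) <= hn y * 2 ^- n).
Proof.
set d := hn y; have [d0|dn] := eqVneq d 0.
  exists (fun=> 0); split => [i|n]; first by rewrite (hnorm0 hip) d0 mulr0 mul0r.
  by rewrite /psum big1 // (lin0 T_lin) sub0r (hnorm_opp hip) -/d d0 mul0r.
have tol_gt0 i : 0 < d * 2 ^- i.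
  by rewrite mulr_gt0 ?invr_gt0 ?exprn_gt0 // lt_def dn hnorm_ge0.
pose P z eps x := hn x <= K * hn z /\ hn (T x - z) < eps.
pose pick z eps := epsilon (inhabits 0) (P z eps).
have pickP z eps : 0 < eps -> P z eps (pick z eps).
  by move=> eps0; apply: epsilon_spec; apply: T_approx.
pose fix res i := if i is i'.+1 then res i' - T (pick (res i') (d * 2 ^- i)) else y.
pose xs i := pick (res i) (d * 2 ^- i.+1).
have res_le i : hn (res i) <= d * 2 ^- i.
  case: i => [|i]; first by rewrite expr0 invr1 mulr1.
  by rewrite /= (hdistC hip) ltW //; apply: (pickP _ _ (tol_gt0 _)).2.
have T_psum n : T (psum xs n) = y - res n.
  elim: n => [|n IH]; first by rewrite /psum big_geq // (lin0 T_lin) subrr.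
  by rewrite /psum big_nat_recr //= (linD T_lin) -/(psum xs n) IH opprD opprK addrA.
exists xs; split => [i|n].
  apply: le_trans (pickP _ _ (tol_gt0 _)).1 _.
  by rewrite -mulrA ler_wpM2l.
by rewrite T_psum addrAC subrr add0r (hnorm_opp hip).
Qed.

Lemma bounded_preimage y : exists x, T x = y /\ hn x <= 2 * K * hn y.
Proof.
have [xs [xs_le T_xs]] := approx_series y; set d := hn y.
have d_ge0 : 0 <= d := hnorm_ge0 _ _.
have term_ge0 i : 0 <= K * d * 2 ^- i by rewrite !mulr_ge0 ?invr_ge0 ?exprn_ge0.
have sum_le n : \sum_(0 <= i < n) K * d * 2 ^- i <= 2 * K * d.
  by rewrite -mulr_sumr sum_halfpow; have := term_ge0 n; lra.
have psum_le n m : hn (\sum_(n <= i < m) xs i) <= \sum_(n <= i < m) K * d * 2 ^- i.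
  by apply: le_trans (ler_hnorm_sum hip _ _) (ler_sum _ _) => i _; apply: xs_le.
have cauchy : cauchy_seq ip (psum xs).
  apply: (cauchy_psum hip) => eps eps0.
  have [N hN] := bounded_series_tail term_ge0 sum_le eps0.
  by exists N => n m /hN lt_tail; apply: le_lt_trans (psum_le n m) (lt_tail m).
have lim := cauchy_hlim hV cauchy.
exists (hlim ip (psum xs)); split.
  apply: (tendsto_unique hip (tendsto_bounded_op lim)) => eps eps0.
  have d1 : 0 < d + 1 by rewrite ltr_pwDr.
  have [N hN] := halfpow_small (divr_gt0 eps0 d1).
  exists N => n /hN; rewrite ltr_pdivlMr // => small.
  have : 0 <= 2 ^- n :> R by rewrite invr_ge0 exprn_ge0.
  have := T_xs n; rewrite -/d; lra.
apply: (tendsto_hnorm_le hip lim (N := 0)) => n _.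
exact: le_trans (psum_le 0 n) (sum_le n).
Qed.

End SuccessiveApproximation.

Lemma open_mapping : exists C, forall y, exists x, T x = y /\ hn x <= C * hn y.
Proof.
have [K [K_ge0 T_approx]] := approx_image_everywhere.
by exists (2 * K) => y; apply: bounded_preimage.
Qed.

End OpenMapping.

Lemma bounded_inverse (R : realType) (V : lmodType R[i]) (ip : V -> V -> R[i]) (T : V -> V) :
  hilbert ip -> bounded_linear_endo ip T -> bijective T ->
  exists C, forall x, hnorm ip x <= C * hnorm ip (T x).
Proof.
move=> hV hT [S TS ST]; have [C hC] := open_mapping hV hT (fun y => ex_intro _ (S y) (ST y)).
exists C => x; have [x' [Tx' hx']] := hC (T x).
by move: hx'; rewrite (can_inj TS Tx').
Qed.

(** * Riesz bases *)

Lemma hnorm_bound_abs (R : rcfType) (V U : lmodType R[i]) (ip : V -> V -> R[i])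
    (ipU : U -> U -> R[i]) (f : V -> U) (M : R) :
  (forall x, hnorm ipU (f x) <= M * hnorm ip x) ->
  forall x, hnorm ipU (f x) <= `|M| * hnorm ip x.
Proof. by move=> hM x; apply: le_trans (hM x) (ler_wpM2r (hnorm_ge0 _ _) (ler_norm _)). Qed.

Lemma sqr_summable_bounded (R : rcfType) (U : lmodType R[i]) (ipU : U -> U -> R[i])
    (v : nat -> U) :
  sqr_summable ipU v -> exists B, forall j, hnorm ipU (v j) <= B.
Proof.
move=> [M hM]; exists (Num.sqrt M) => j.
have le_M : hnorm ipU (v j) ^+ 2 <= M.
  apply: le_trans (hM j.+1); rewrite big_ord_recr /= lerDr.
  by apply: sumr_ge0 => i _; apply: sqr_ge0.
rewrite -(ger0_norm (hnorm_ge0 _ (v j))) -sqrtr_sqr ler_sqrt //.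
exact: le_trans (sqr_ge0 _) le_M.
Qed.

Lemma sqr_summableZ (R : rcfType) (U : lmodType R[i]) (ipU : U -> U -> R[i])
    (v : nat -> U) (c : nat -> R[i]) (B : R) :
  is_inner_product ipU -> (forall j, normc (c j) <= B) ->
  sqr_summable ipU v -> sqr_summable ipU (fun j => c j *: v j).
Proof.
move=> hipU hc [M hM]; exists (B ^+ 2 * M) => n.
have B_ge0 : 0 <= B := le_trans (normc_ge0 _) (hc 0%N).
apply: le_trans (_ : \sum_(j < n) B ^+ 2 * hnorm ipU (v j) ^+ 2 <= _).
  apply: ler_sum => j _; rewrite (hnormZ hipU) exprMn ler_wpM2r ?sqr_ge0 //.
  by rewrite lerXn2r ?nnegrE ?normc_ge0.
by rewrite -mulr_sumr ler_wpM2l ?sqr_ge0.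
Qed.

Section ProductSpace.
Variables (R : rcfType) (Z W : lmodType R[i]).
Variables (ipZ : Z -> Z -> R[i]) (ipW : W -> W -> R[i]).
Hypotheses (hipZ : is_inner_product ipZ) (hipW : is_inner_product ipW).
Local Notation X := (prod_ip ipZ ipW).

Lemma hnorm_prod a b : hnorm X (a, b) = Num.sqrt (hnorm ipZ a ^+ 2 + hnorm ipW b ^+ 2).
Proof. by rewrite {1}/hnorm /prod_ip /= (ip_self hipZ a) (ip_self hipW b) -rmorphD. Qed.

Lemma hnorm_prod_ge_l a b : hnorm ipZ a <= hnorm X (a, b).
Proof.
rewrite hnorm_prod -[X in X <= _](ger0_norm (hnorm_ge0 _ a)) -sqrtr_sqr.
by rewrite ler_sqrt ?addr_ge0 ?sqr_ge0 // lerDl sqr_ge0.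
Qed.

Lemma hnorm_prod_ge_r a b : hnorm ipW b <= hnorm X (a, b).
Proof.
rewrite hnorm_prod -[X in X <= _](ger0_norm (hnorm_ge0 _ b)) -sqrtr_sqr.
by rewrite ler_sqrt ?addr_ge0 ?sqr_ge0 // lerDr sqr_ge0.
Qed.

Lemma hnorm_prod_le a b : hnorm X (a, b) <= hnorm ipZ a + hnorm ipW b.
Proof.
rewrite hnorm_prod -(ger0_norm (addr_ge0 (hnorm_ge0 _ a) (hnorm_ge0 _ b))) -sqrtr_sqr.
rewrite ler_sqrt ?sqr_ge0 // sqrrD mulr2n.
by have := mulr_ge0 (hnorm_ge0 ipZ a) (hnorm_ge0 ipW b); lra.
Qed.

Lemma hnorm_prod0l b : hnorm X (0, b) = hnorm ipW b.
Proof. by rewrite hnorm_prod (hnorm0 hipZ) expr0n add0r sqrtr_sqr ger0_norm ?hnorm_ge0. Qed.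

Definition prod_basis (ez : nat -> Z) (ew : nat -> W) (i : nat + nat) : Z * W :=
  match i with inl j => (ez j, 0) | inr k => (0, ew k) end.

Lemma orthonormal_basis_prod ez ew :
  orthonormal_basis ipZ ez -> orthonormal_basis ipW ew ->
  orthonormal_basis X (prod_basis ez ew).
Proof.
move=> hez hew; split; last split.
- case=> i; rewrite /prod_basis /prod_ip /= ?(ip0l hipZ) ?(ip0l hipW).
    by rewrite (onb_ip_self hez) addr0.
  by rewrite (onb_ip_self hew) add0r.
- case=> i [] j ij; rewrite /prod_basis /prod_ip /=.
  + by rewrite (ip0l hipW) addr0 (onb_ip_orth hez) // => eq_ij; apply: ij; rewrite eq_ij.
  + by rewrite (ip0r hipZ) (ip0l hipW) addr0.
  + by rewrite (ip0l hipZ) (ip0r hipW) addr0.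
  + by rewrite (ip0l hipZ) add0r (onb_ip_orth hew) // => eq_ij; apply: ij; rewrite eq_ij.
- case=> a b h; congr (_, _).
    apply: (onb_complete hez) => j; have := h (inl j).
    by rewrite /prod_ip /= (ip0r hipW) addr0.
  apply: (onb_complete hew) => k; have := h (inr k).
  by rewrite /prod_ip /= (ip0r hipZ) add0r.
Qed.

End ProductSpace.

Lemma riesz_basis_ext (R : rcfType) (V : lmodType R[i]) (ip : V -> V -> R[i])
    (I : Type) (x y : I -> V) :
  (forall i, x i = y i) -> riesz_basis ip x -> riesz_basis ip y.
Proof. by move=> xy [e [T [he hT hTb ex]]]; exists e, T; split => // i; rewrite -xy. Qed.

Lemma bounded_linear_endo_comp (R : rcfType) (V : lmodType R[i]) (ip : V -> V -> R[i])
    (T S : V -> V) :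
  bounded_linear_endo ip T -> bounded_linear_endo ip S -> bounded_linear_endo ip (T \o S).
Proof.
move=> [T_lin [MT hMT]] [S_lin [MS hMS]]; split; first by move=> a x y /=; rewrite S_lin T_lin.
exists (`|MT| * `|MS|) => x /=; apply: le_trans (hnorm_bound_abs hMT _) _.
by rewrite -mulrA ler_wpM2l // hnorm_bound_abs.
Qed.

Section RieszBasis.
Variables (R : realType) (V : lmodType R[i]) (ip : V -> V -> R[i]).
Hypothesis hV : hilbert ip.
Let hip : is_inner_product ip := proj1 hV.
Local Notation hn := (hnorm ip).

Lemma riesz_basis_bounds (I : Type) (x : I -> V) : riesz_basis ip x ->
  exists m M, 0 < m /\ forall i, m <= hn (x i) <= M.
Proof.
move=> [e [T [he hT hTb ex]]]; have [C hC] := bounded_inverse hV hT hTb.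
have [_ [M hM]] := hT; exists (`|C| + 1)^-1, M; split; first by rewrite invr_gt0 ltr_pwDr.
have he1 i : hn (e i) = 1 by rewrite (hnorm_onb he).
move=> i; rewrite ex; apply/andP; split; last by have := hM (e i); rewrite he1 mulr1.
have C1 : 0 < `|C| + 1 by rewrite ltr_pwDr.
rewrite -[leLHS]mulr1 ler_pdivrMl // -{1}(he1 i); apply: le_trans (hC _) _.
by apply: ler_wpM2r; rewrite ?hnorm_ge0 // (le_trans (ler_norm C)) // lerDl.
Qed.

Lemma riesz_basisZ (x : nat -> V) (c : nat -> R[i]) (m M : R) : 0 < m ->
  (forall j, m <= normc (c j) <= M) -> riesz_basis ip x ->
  riesz_basis ip (fun j => c j *: x j).
Proof.
move=> m_gt0 hc [e [T [he hT [S TS ST] ex]]].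
have c_le j : normc (c j) <= M by have /andP[] := hc j.
have c_gt0 j : 0 < normc (c j) by have /andP[/(lt_le_trans m_gt0)] := hc j.
have c_neq0 j : c j != 0 by apply: contraTneq (c_gt0 j) => ->; rewrite normc0 ltxx.
have cV_le j : normc (c j)^-1 <= m^-1.
  by have /andP[le_m _] := hc j; rewrite normcV lef_pV2 ?posrE.
have cVc j : (c j)^-1 * c j = 1 by rewrite mulVf.
have ccV j : c j * (c j)^-1 = 1 by rewrite divff.
exists e, (T \o diag_op ip e c); split => //.
- apply: bounded_linear_endo_comp => //; split; first exact: diag_op_linear c_le.
  by exists M; apply: hnorm_diag_op_le c_le.
- exists (diag_op ip e (fun j => (c j)^-1) \o S) => a /=.
    by rewrite TS (diag_opK hV he cV_le c_le cVc).
  by rewrite (diag_opK hV he c_le cV_le ccV) ST.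
- by move=> j /=; rewrite ex (diag_op_onb hV he c_le) (linZ (proj1 hT)).
Qed.

Lemma riesz_basis_normalize (x : nat -> V) :
  riesz_basis ip x -> riesz_basis ip (fun j => normalize ip (x j)).
Proof.
move=> hx; have [m [M [m_gt0 x_bd]]] := riesz_basis_bounds hx.
have M_gt0 : 0 < M by have /andP[/(lt_le_trans m_gt0) /lt_le_trans] := x_bd 0%N; apply.
apply: (riesz_basisZ (m := M^-1) (M := m^-1)) => // [|j]; first by rewrite invr_gt0.
have /andP[le_m le_M] := x_bd j; have x_gt0 := lt_le_trans m_gt0 le_m.
by rewrite normc_real ger0_norm ?invr_ge0 ?(ltW x_gt0) // !lef_pV2 ?posrE // le_m le_M.
Qed.

End RieszBasis.

Section TriangularPerturbation.
Variables (R : realType) (Z W : lmodType R[i]).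
Variables (ipZ : Z -> Z -> R[i]) (ipW : W -> W -> R[i]).
Hypotheses (hZ : hilbert ipZ) (hW : hilbert ipW).
Let hipZ : is_inner_product ipZ := proj1 hZ.
Let hipW : is_inner_product ipW := proj1 hW.
Local Notation X := (prod_ip ipZ ipW).

Lemma bounded_linear_endo_triangular (Tz : Z -> Z) (Tw : W -> W) (K : Z -> W) :
  bounded_linear_endo ipZ Tz -> bounded_linear_endo ipW Tw -> linear K ->
  (exists MK, forall a, hnorm ipW (K a) <= MK * hnorm ipZ a) ->
  bounded_linear_endo X (fun p => (Tz p.1, K p.1 + Tw p.2)).
Proof.
move=> [Tz_lin [Mz hMz]] [Tw_lin [Mw hMw]] K_lin [MK hMK]; split.
  move=> c [a b] [a' b'] /=; rewrite Tz_lin Tw_lin K_lin.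
  have -> (a1 a2 : Z) (b1 b2 : W) :
      c *: ((a1, b1) : Z * W) + (a2, b2) = (c *: a1 + a2, c *: b1 + b2) by [].
  by rewrite scalerDr addrACA.
exists (`|Mz| + `|MK| + `|Mw|) => -[a b] /=.
apply: le_trans (hnorm_prod_le hipZ hipW _ _) _.
have le_a := hnorm_prod_ge_l hipZ hipW a b; have le_b := hnorm_prod_ge_r hipZ hipW a b.
have := ler_hnormD hipW (K a) (Tw b).
have := hnorm_bound_abs hMz a; have := hnorm_bound_abs hMK a; have := hnorm_bound_abs hMw b.
have := ler_wpM2l (normr_ge0 Mz) le_a; have := ler_wpM2l (normr_ge0 MK) le_a.
have := ler_wpM2l (normr_ge0 Mw) le_b; lra.
Qed.

Lemma riesz_basis_triangular (x : nat -> Z) (y v : nat -> W) :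
  riesz_basis ipZ x -> riesz_basis ipW y -> sqr_summable ipW v ->
  riesz_basis X (fun i => match i with inl j => (x j, v j) | inr k => (0, y k) end).
Proof.
move=> [ez [Tz [hez hTz [Sz TzS SzT] ex]]] [ew [Tw [hew hTw [Sw TwS SwT] ey]]] hv.
pose K := transfer_op ipZ ipW ez v.
have K_lin : linear K := transfer_op_linear hZ hW hez hv.
have Tw_lin : linear Tw := proj1 hTw.
exists (prod_basis ez ew), (fun p => (Tz p.1, K p.1 + Tw p.2)); split.
- exact: orthonormal_basis_prod.
- exact: bounded_linear_endo_triangular (transfer_op_bounded hZ hW hez hv).
- exists (fun p => (Sz p.1, Sw (p.2 - K (Sz p.1)))) => -[a b] /=.
    by rewrite TzS [K a + _]addrC addrK TwS.
  by rewrite SzT SwT addrC subrK.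
- case=> [j|k] /=; first by rewrite ex /K (transfer_op_onb hZ hW hez hv) (lin0 Tw_lin) addr0.
  by rewrite ey (lin0 (proj1 hTz)) (lin0 K_lin) add0r.
Qed.

Lemma riesz_basis_triangular_normalize (x : nat -> Z) (y v : nat -> W) :
  riesz_basis ipZ x -> riesz_basis ipW y -> sqr_summable ipW v ->
  riesz_basis X (fun i => match i with
    | inl j => normalize X (x j, v j)
    | inr k => normalize X (0, y k)
    end).
Proof.
move=> hx hy hv; have [m [M [m_gt0 x_bd]]] := riesz_basis_bounds hZ hx.
have [B v_le] := sqr_summable_bounded hv.
pose n j := hnorm X (x j, v j).
have n_bd j : m <= n j <= M + B.
  have /andP[le_m le_M] := x_bd j; apply/andP; split.
    exact: le_trans le_m (hnorm_prod_ge_l hipZ hipW _ _).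
  exact: le_trans (hnorm_prod_le hipZ hipW _ _) (lerD le_M (v_le j)).
have MB_gt0 : 0 < M + B.
  by have /andP[le_m le_MB] := n_bd 0%N; exact: lt_le_trans m_gt0 (le_trans le_m le_MB).
pose c j := (n j)^-1%:C.
have c_bd j : (M + B)^-1 <= normc (c j) <= m^-1.
  have /andP[le_m le_MB] := n_bd j; have n_gt0 := lt_le_trans m_gt0 le_m.
  by rewrite normc_real ger0_norm ?invr_ge0 ?(ltW n_gt0) // !lef_pV2 ?posrE // le_m le_MB.
have MBV_gt0 : 0 < (M + B)^-1 by rewrite invr_gt0.
have hx' := riesz_basisZ hZ MBV_gt0 c_bd hx.
have c_le j : normc (c j) <= m^-1 by have /andP[] := c_bd j.
have hv' := sqr_summableZ hipW c_le hv.
apply: riesz_basis_ext (riesz_basis_triangular hx' (riesz_basis_normalize hW hy) hv').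
case=> [j|k] //; rewrite /normalize hnorm_prod0l //.
by rewrite -[X in (X, _)](scaler0 _ (hnorm ipW (y k))^-1%:C).
Qed.

End TriangularPerturbation.

Theorem proposition2p9 (R : realType) (Z W Y : lmodType R[i])
  (ipZ : Z -> Z -> R[i]) (ipW : W -> W -> R[i]) (ipY : Y -> Y -> R[i])
  (hZ : hilbert ipZ) (hW : hilbert ipW) (hY : hilbert ipY)
  (DA : Z -> Prop) (A : Z -> Z) (DE : W -> Prop) (E : W -> W)
  (hA : closed_densely_defined ipZ DA A) (hE : closed_densely_defined ipW DE E)
  (DEs : W -> Prop) (Es : W -> W) (hEs : is_adjoint ipW DE E DEs Es)
  (C : Z -> Y) (hC : bounded_on_domain ipZ ipY DA A C)
  (F : Y -> W -> R[i]) (hF : bounded_into_extrapolation ipY ipW DEs Es F)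
  (z : nat -> Z) (lam : nat -> R[i]) (w : nat -> W) (mu : nat -> R[i])
  (hz : riesz_basis ipZ z) (hzA : forall j, DA (z j) /\ A (z j) = lam j *: z j)
  (hw : riesz_basis ipW w) (hwE : forall k, DE (w k) /\ E (w k) = mu k *: w k)
  (hdisj : forall l, op_eigenvalue DA A l -> ~ op_eigenvalue DE E l)
  (v : nat -> W)
  (hv : forall j, is_ext_resolvent ipW DEs Es (lam j) (F (C (z j))) (v j))
  (hsum : exists M : R, forall n, \sum_(j < n) hnorm ipW (v j) ^+ 2 <= M) :
  riesz_basis (prod_ip ipZ ipW)
    (fun i : nat + nat => match i with
       | inl j => normalize (prod_ip ipZ ipW) (z j, v j)
       | inr k => normalize (prod_ip ipZ ipW) (0, w k)
       end).
Proof.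
exact (riesz_basis_triangular_normalize hZ hW hz hw hsum).
Qed.
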